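(* Let $(X,T)$ be a topological dynamical system and $\mu$ a $T$-invariant Borel probability measure on $X$. Then $\mu$ has bounded complexity with respect to $\{\bar d_n\}$ if and only if $\mu$ has bounded complexity with respect to $\{\hat d_n\}$.
   Context: A t.d.s. $(X,T)$ consists of a compact metric space $(X,d)$ and a continuous map $T\colon X\to X$. Let $\bar d_n(x,y)=\frac1n\sum_{i=0}^{n-1}d(T^ix,T^iy)$ and $\hat d_n(x,y)=\max\{\bar d_k(x,y)\colon1\le k\le n\}$. For $\rho_n\in\{\bar d_n,\hat d_n\}$ let $B_{\rho_n}(x,\varepsilon)=\{y\colon\rho_n(x,y)<\varepsilon\}$ and $\mathrm{span}^{\rho}_\mu(n,\varepsilon)=\min\{\#(F)\colon F\subset X,\ \mu(\bigcup_{x\in F}B_{\rho_n}(x,\varepsilon))>1-\varepsilon\}$. $\mu$ has bounded complexity with respect to $\{\rho_n\}$ if for every $\varepsilon>0$ there is a positive integer $C$ with $\mathrm{span}^{\rho}_\mu(n,\varepsilon)\le C$ for all $n\ge1$. *)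

From Stdlib Require Import Reals Lra List.
Open Scope R_scope.

Section TDS.
Variable X : Type.

Definition is_metric (d : X -> X -> R) : Prop :=
  (forall x y, 0 <= d x y) /\
  (forall x y, d x y = 0 <-> x = y) /\
  (forall x y, d x y = d y x) /\
  (forall x y z, d x z <= d x y + d y z).

Definition open_set (d : X -> X -> R) (A : X -> Prop) : Prop :=
  forall x, A x -> exists r, 0 < r /\ forall y, d x y < r -> A y.

Definition compact_space (d : X -> X -> R) : Prop :=
  forall (I : Type) (U : I -> X -> Prop),
    (forall i, open_set d (U i)) -> (forall x, exists i, U i x) ->
    exists l : list I, forall x, exists i, In i l /\ U i x.

Definition continuous_map (d : X -> X -> R) (T : X -> X) : Prop :=
  forall x eps, 0 < eps -> exists delta, 0 < delta /\
    forall y, d x y < delta -> d (T x) (T y) < eps.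

Inductive borel (d : X -> X -> R) : (X -> Prop) -> Prop :=
| borel_open : forall A, open_set d A -> borel d A
| borel_compl : forall A, borel d A -> borel d (fun x => ~ A x)
| borel_union : forall A : nat -> X -> Prop, (forall n, borel d (A n)) ->
    borel d (fun x => exists n, A n x).

Definition borel_prob_measure (d : X -> X -> R) (mu : (X -> Prop) -> R) : Prop :=
  (forall A, borel d A -> 0 <= mu A) /\
  mu (fun _ => True) = 1 /\
  (forall A : nat -> X -> Prop,
     (forall n, borel d (A n)) ->
     (forall m n x, m <> n -> A m x -> A n x -> False) ->
     infinite_sum (fun n => mu (A n)) (mu (fun x => exists n, A n x))).

Definition invariant_measure (d : X -> X -> R) (T : X -> X) (mu : (X -> Prop) -> R) : Prop :=
  forall A, borel d A -> mu (fun x => A (T x)) = mu A.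

Definition dbar (d : X -> X -> R) (T : X -> X) (n : nat) (x y : X) : R :=
  / INR n * sum_f_R0 (fun i => d (Nat.iter i T x) (Nat.iter i T y)) (n - 1).

Definition dhat (d : X -> X -> R) (T : X -> X) (n : nat) (x y : X) : R :=
  fold_right Rmax (dbar d T 1 x y) (map (fun k => dbar d T k x y) (seq 1 n)).

Definition ball_union (rho : nat -> X -> X -> R) (n : nat) (eps : R)
  (F : list X) : X -> Prop :=
  fun y => exists x, In x F /\ rho n x y < eps.

(* span^rho_mu(n,eps) <= C, i.e. the minimum in the definition of span is
   at most C: some F with #F <= C has mu(union of balls) > 1 - eps *)
Definition span_le (rho : nat -> X -> X -> R) (mu : (X -> Prop) -> R)
  (n : nat) (eps : R) (C : nat) : Prop :=
  exists F : list X, NoDup F /\ (length F <= C)%nat /\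
    mu (ball_union rho n eps F) > 1 - eps.

Definition bounded_complexity (rho : nat -> X -> X -> R) (mu : (X -> Prop) -> R) : Prop :=
  forall eps, 0 < eps -> exists C : nat, (1 <= C)%nat /\
    forall n, (1 <= n)%nat -> span_le rho mu n eps C.

End TDS.

From Pilot Require Import Defs.
From Stdlib Require Import Reals List Lra Lia ZArith.
From Stdlib Require Import FunctionalExtensionality PropExtensionality Classical ClassicalEpsilon.
Open Scope R_scope.

(* Since dbar_n <= dhat_n, every dhat_n-cover is a dbar_n-cover. Conversely, fix eps and a
   small delta, and cover measure 1 - delta by C balls of dbar_{2m}-radius delta around the
   points of F. If dbar_{2m}(c, x) < delta, the rising sun lemma applied to the sequence
   d(T^i c, T^i x) shows that at most a fraction 2 delta / eps of the shifts j < m start a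
   window [j, j + k), 1 <= k <= m, on which this sequence has average >= eps; for every other
   j we get dhat_m(T^j c, T^j x) < eps. Averaging over j, for some j the preimage under T^j of
   the union of the dhat_m-balls of radius eps around T^j F has measure at least
   (1 - 2 delta / eps)(1 - delta), and T-invariance of mu transfers this to the union itself. *)

Fixpoint rsum (f : nat -> R) (n : nat) : R :=
  match n with O => 0 | S n => rsum f n + f n end.

Lemma sum_f_R0_rsum f n : (1 <= n)%nat -> sum_f_R0 f (n - 1) = rsum f n.
Proof.
  destruct n as [|n]; [lia|]; intros _; simpl Nat.sub; rewrite Nat.sub_0_r.
  induction n as [|n IHn]; simpl; [ring|]; simpl in IHn; rewrite IHn; reflexivity.
Qed.

Lemma rsum_ext f g n : (forall i, (i < n)%nat -> f i = g i) -> rsum f n = rsum g n.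
Proof.
  induction n as [|n IHn]; intro h; simpl; [reflexivity|].
  rewrite IHn, h; [reflexivity|lia|intros; apply h; lia].
Qed.

Lemma rsum_le f g n : (forall i, (i < n)%nat -> f i <= g i) -> rsum f n <= rsum g n.
Proof.
  induction n as [|n IHn]; intro h; simpl; [lra|].
  apply Rplus_le_compat; [apply IHn; intros; apply h|apply h]; lia.
Qed.

Lemma rsum_plus f g n : rsum (fun i => f i + g i) n = rsum f n + rsum g n.
Proof. induction n as [|n IHn]; simpl; [ring|]; rewrite IHn; ring. Qed.

Lemma rsum_const c n : rsum (fun _ => c) n = INR n * c.
Proof. induction n as [|n IHn]; simpl rsum; [simpl; ring|]; rewrite IHn, S_INR; ring. Qed.

Lemma rsum_split f k n : (k <= n)%nat ->
  rsum f n = rsum f k + rsum (fun i => f (k + i)%nat) (n - k).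
Proof.
  intro hk; replace n with (k + (n - k))%nat at 1 by lia.
  induction (n - k)%nat as [|b IHb]; simpl; [rewrite Nat.add_0_r; ring|].
  rewrite Nat.add_succ_r; simpl; rewrite IHb; ring.
Qed.

Lemma rsum_lt_const f c n : (1 <= n)%nat -> (forall i, (i < n)%nat -> f i < c) ->
  rsum f n < INR n * c.
Proof.
  rewrite <- rsum_const; induction n as [|n IHn]; intros hn h; [lia|].
  destruct n as [|n]; simpl in *; [specialize (h 0%nat ltac:(lia)); lra|].
  apply Rplus_lt_compat; [apply IHn; [lia|intros; apply h; lia]|apply h; lia].
Qed.

Lemma rsum_exists_large u q (a e : nat -> R) n : (1 <= n)%nat ->
  (forall j, (j < n)%nat -> u <= a j + e j) -> rsum e n <= q * INR n * u ->
  exists j, (j < n)%nat /\ (1 - q) * u <= a j.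
Proof.
  intros hn hu he; apply NNPP; intro hno.
  assert (hsmall := rsum_lt_const a ((1 - q) * u) n hn
    (fun j hj => Rnot_le_lt _ _ (fun h => hno (ex_intro _ j (conj hj h))))).
  assert (hsum : rsum (fun _ => u) n <= rsum (fun j => a j + e j) n) by (apply rsum_le; exact hu).
  rewrite rsum_plus, rsum_const in hsum; nra.
Qed.

Definition ind (P : Prop) : nat := if excluded_middle_informative P then 1%nat else 0%nat.

Lemma ind_true (P : Prop) : P -> ind P = 1%nat.
Proof. unfold ind; destruct (excluded_middle_informative P); tauto. Qed.

Lemma ind_false (P : Prop) : ~ P -> ind P = 0%nat.
Proof. unfold ind; destruct (excluded_middle_informative P); tauto. Qed.

Lemma ind_le (P Q : Prop) : (P -> Q) -> (ind P <= ind Q)%nat.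
Proof.
  unfold ind; destruct (excluded_middle_informative P), (excluded_middle_informative Q);
  tauto || lia.
Qed.

Lemma ind_iff (P Q : Prop) : (P <-> Q) -> ind P = ind Q.
Proof. intro h; apply Nat.le_antisymm; apply ind_le; apply h. Qed.

Fixpoint count_lt (Q : nat -> Prop) (n : nat) : nat :=
  match n with O => O | S n => (count_lt Q n + ind (Q n))%nat end.

Lemma count_lt_mono P Q n : (forall j, (j < n)%nat -> P j -> Q j) ->
  (count_lt P n <= count_lt Q n)%nat.
Proof.
  induction n as [|n IHn]; intro h; simpl; [lia|].
  assert (h1 := IHn (fun j hj => h j ltac:(lia))).
  assert (h2 := ind_le (P n) (Q n) (h n ltac:(lia))); lia.
Qed.

Lemma count_lt_ext P Q n : (forall j, (j < n)%nat -> P j <-> Q j) ->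
  count_lt P n = count_lt Q n.
Proof.
  intro h; apply Nat.le_antisymm; apply count_lt_mono; intros j hj; apply h; exact hj.
Qed.

Lemma count_lt_le Q n : (count_lt Q n <= n)%nat.
Proof.
  induction n as [|n IHn]; simpl; [lia|].
  assert (h := ind_le (Q n) True (fun _ => I)); rewrite (ind_true True I) in h; lia.
Qed.

Lemma count_lt_split Q k n : (k <= n)%nat ->
  count_lt Q n = (count_lt Q k + count_lt (fun i => Q (k + i)%nat) (n - k))%nat.
Proof.
  intro hk; replace n with (k + (n - k))%nat at 1 by lia.
  induction (n - k)%nat as [|b IHb]; simpl; [rewrite Nat.add_0_r; lia|].
  rewrite Nat.add_succ_r; simpl; rewrite IHb; lia.
Qed.

Lemma count_lt_eq0 Q n : (forall j, (j < n)%nat -> ~ Q j) -> count_lt Q n = 0%nat.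
Proof.
  induction n as [|n IHn]; intro h; simpl; [reflexivity|].
  rewrite IHn, ind_false by (intros; apply h; lia); reflexivity.
Qed.

Lemma count_lt_pos Q n j : (j < n)%nat -> Q j -> (1 <= count_lt Q n)%nat.
Proof.
  induction n as [|n IHn]; intros hj hQ; simpl; [lia|].
  destruct (Nat.eq_dec j n) as [->|hjn]; [rewrite ind_true by exact hQ; lia|].
  specialize (IHn ltac:(lia) hQ); lia.
Qed.

Lemma count_lt_drop_first Q n :
  (count_lt (fun j => Q j /\ exists i, (i < j)%nat /\ Q i) n
   + ind (exists i, (i < n)%nat /\ Q i))%nat = count_lt Q n.
Proof.
  induction n as [|n IHn]; simpl.
  - rewrite ind_false; [reflexivity|intros [i [hi _]]; lia].
  - rewrite <- IHn.
    assert (hS : (exists i, (i < S n)%nat /\ Q i) <-> (exists i, (i < n)%nat /\ Q i) \/ Q n).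
    { split.
      - intros [i [hi hQ]]; destruct (Nat.eq_dec i n) as [->|hin]; [now right|].
        left; exists i; split; [lia|exact hQ].
      - intros [[i [hi hQ]]|hQ]; [exists i|exists n]; split; auto; lia. }
    destruct (classic (exists i, (i < n)%nat /\ Q i)) as [hex|hno].
    + rewrite (ind_iff (Q n /\ _) (Q n)) by tauto.
      rewrite (ind_true (exists i, (i < S n)%nat /\ Q i)),
              (ind_true (exists i, (i < n)%nat /\ Q i)) by tauto.
      lia.
    + rewrite (ind_false (Q n /\ _)) by tauto.
      rewrite (ind_iff (exists i, (i < S n)%nat /\ Q i) (Q n)),
              (ind_false (exists i, (i < n)%nat /\ Q i)) by tauto.
      lia.
Qed.

Definition heavy (a : nat -> R) (e : R) (n j : nat) : Prop :=
  exists k, (1 <= k)%nat /\ (j + k <= n)%nat /\ e * INR k <= rsum (fun i => a (j + i)%nat) k.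

Lemma heavy_shift a e n k i : (k <= n)%nat ->
  heavy a e n (k + i) <-> heavy (fun i => a (k + i)%nat) e (n - k) i.
Proof.
  intro hk; assert (hsum : forall l,
    rsum (fun i' => a (k + i + i')%nat) l = rsum (fun i' => a (k + (i + i'))%nat) l)
    by (intro; apply rsum_ext; intros; f_equal; lia).
  split; intros [l [hl1 [hl2 hl3]]]; exists l; (split; [exact hl1|split; [lia|]]);
  [rewrite <- hsum|rewrite hsum]; exact hl3.
Qed.

Lemma rising_sun a e n : (forall i, 0 <= a i) -> 0 <= e ->
  e * INR (count_lt (heavy a e n) n) <= rsum a n.
Proof.
  revert a; induction n as [n IHn] using (well_founded_induction lt_wf); intros a ha he.
  destruct n as [|n']; [simpl; lra|]; set (n := S n').
  (* Peel off a heavy window starting at 0 (or the single light index 0) and recurse. *)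
  assert (hfirst : exists k, (1 <= k <= n)%nat /\
            e * INR (count_lt (heavy a e n) k) <= rsum a k).
  { destruct (classic (heavy a e n 0)) as [[k [hk1 [hkn hk]]]|hnot].
    - exists k; split; [lia|].
      assert (hc := le_INR _ _ (count_lt_le (heavy a e n) k)).
      apply Rle_trans with (e * INR k); [nra|exact hk].
    - exists 1%nat; split; [unfold n; lia|].
      simpl; rewrite ind_false by exact hnot; specialize (ha 0%nat); simpl; lra. }
  destruct hfirst as [k [hk hblock]].
  rewrite (count_lt_split _ k n), (rsum_split a k n), plus_INR by lia.
  rewrite (count_lt_ext (fun i => heavy a e n (k + i))
    (heavy (fun i => a (k + i)%nat) e (n - k))) by
    (intros; apply heavy_shift; lia).
  assert (hrest := IHn (n - k)%nat ltac:(lia) (fun i => a (k + i)%nat) (fun i => ha _) he).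
  lra.
Qed.

Lemma set_ext {X : Type} (A B : X -> Prop) : (forall x, A x <-> B x) -> A = B.
Proof.
  intro h; apply functional_extensionality; intro x; apply propositional_extensionality; auto.
Qed.

Section BorelMeasure.
Variable X : Type.
Variable d : X -> X -> R.
Variable mu : (X -> Prop) -> R.
Hypothesis Hmu : borel_prob_measure X d mu.

Lemma borel_ext A B : borel X d A -> (forall x, A x <-> B x) -> borel X d B.
Proof. intros h e; rewrite <- (set_ext _ _ e); exact h. Qed.

Lemma borel_empty : borel X d (fun _ => False).
Proof. apply borel_open; intros x []. Qed.

Lemma borel_or A B : borel X d A -> borel X d B -> borel X d (fun x => A x \/ B x).
Proof.
  intros hA hB; apply borel_ext with (fun x => exists n, (match n with O => A | _ => B end) x).
  - apply borel_union; intros [|n]; assumption.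
  - intro x; split; [intros [[|n] h]; auto|intros [h|h]; [exists O|exists 1%nat]; exact h].
Qed.

Lemma borel_and A B : borel X d A -> borel X d B -> borel X d (fun x => A x /\ B x).
Proof.
  intros hA hB; apply borel_ext with (fun x => ~ (~ A x \/ ~ B x)).
  - apply borel_compl, borel_or; apply borel_compl; assumption.
  - intro x; tauto.
Qed.

Lemma borel_fin_union (E : nat -> X -> Prop) n : (forall i, borel X d (E i)) ->
  borel X d (fun x => exists i, (i < n)%nat /\ E i x).
Proof.
  intro hE; apply borel_union; intro i; destruct (lt_dec i n) as [h|h].
  - apply borel_ext with (E i); [apply hE|intro; tauto].
  - apply borel_ext with (fun _ => False); [apply borel_empty|intro; tauto].
Qed.

Lemma mu_ext A B : (forall x, A x <-> B x) -> mu A = mu B.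
Proof. intro e; rewrite (set_ext _ _ e); reflexivity. Qed.

Lemma mu_nonneg A : borel X d A -> 0 <= mu A.
Proof. apply Hmu. Qed.

Lemma mu_empty : mu (fun _ => False) = 0.
Proof.
  destruct Hmu as [_ [_ hadd]].
  assert (hs := hadd (fun _ _ => False) (fun _ => borel_empty) (fun _ _ _ _ h _ => h)); cbv beta in hs.
  rewrite (mu_ext (fun x => exists n : nat, False) (fun _ => False)) in hs
    by (intro; split; [intros [_ []]|intros []]).
  set (c := mu (fun _ => False)) in hs |- *.
  assert (hdiff := CV_minus _ _ _ _ (CV_shift' _ 1 _ hs) hs); cbv beta in hdiff.
  apply (UL_sequence (fun _ => c)).
  - intros eps heps; exists O; intros; rewrite Rdist_eq; exact heps.
  - replace (c - c) with 0 in hdiff by ring; intros eps heps; destruct (hdiff eps heps) as [N hN].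
    exists N; intros n hn; specialize (hN n hn); rewrite Nat.add_1_r in hN; simpl in hN.
    replace (sum_f_R0 (fun _ => c) n + c - sum_f_R0 (fun _ => c) n) with c in hN by ring.
    exact hN.
Qed.

Lemma mu_add A B : borel X d A -> borel X d B -> (forall x, A x -> B x -> False) ->
  mu (fun x => A x \/ B x) = mu A + mu B.
Proof.
  intros hA hB hdisj; destruct Hmu as [_ [_ hadd]].
  set (S := fun n => match n with O => A | 1%nat => B | _ => fun _ : X => False end).
  assert (hs : infinite_sum (fun n => mu (S n)) (mu (fun x => A x \/ B x))).
  { rewrite (mu_ext _ (fun x => exists n, S n x)).
    - apply hadd; [intros [|[|n]]; simpl; auto using borel_empty|].
      intros [|[|m]] [|[|n]] x hmn; simpl; try tauto; eauto.
    - intro x; split; [intros [h|h]; [exists O|exists 1%nat]; exact h|].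
      intros [[|[|n]] h]; simpl in h; tauto. }
  apply (uniqueness_sum (fun n => mu (S n))); [exact hs|].
  intros eps heps; exists 1%nat; intros n hn.
  replace (sum_f_R0 (fun n => mu (S n)) n) with (mu A + mu B);
    [unfold Rdist; rewrite Rminus_diag, Rabs_R0; exact heps|].
  destruct n as [|n]; [lia|]; clear hn.
  induction n as [|n IHn]; simpl in *; [reflexivity|]; rewrite <- IHn, mu_empty; ring.
Qed.

Lemma mu_mono A B : borel X d A -> borel X d B -> (forall x, A x -> B x) -> mu A <= mu B.
Proof.
  intros hA hB hAB.
  assert (hBA : borel X d (fun x => B x /\ ~ A x)) by (apply borel_and, borel_compl; assumption).
  rewrite (mu_ext B (fun x => A x \/ (B x /\ ~ A x))), mu_add; try assumption.
  - assert (h := mu_nonneg _ hBA); lra.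
  - intros x a [_ b]; contradiction.
  - intro x; destruct (classic (A x)); split; intuition.
Qed.

Lemma mu_rsum_disjoint (E : nat -> X -> Prop) n : (forall i, borel X d (E i)) ->
  (forall i j x, (i < j)%nat -> E i x -> E j x -> False) ->
  rsum (fun j => mu (E j)) n = mu (fun x => exists j, (j < n)%nat /\ E j x).
Proof.
  intros hE hdisj; induction n as [|n IHn]; simpl.
  - rewrite <- mu_empty; apply mu_ext; intro x; split; [tauto|intros [j [hj _]]; lia].
  - rewrite IHn, <- mu_add by (auto using borel_fin_union; intros x [j [hj h1]] h2; eauto).
    apply mu_ext; intro x; split.
    + intros [[j [hj h]]|h]; [exists j; split; [lia|exact h]|exists n; auto].
    + intros [j [hj h]]; destruct (Nat.eq_dec j n) as [->|hjn]; [now right|].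
      left; exists j; split; [lia|exact h].
Qed.

Lemma mu_rsum_le_count (b : nat) : forall N (E : nat -> X -> Prop) U,
  borel X d U -> (forall j, borel X d (E j)) -> (forall j x, E j x -> U x) ->
  (forall x, U x -> (count_lt (fun j => E j x) N <= b)%nat) ->
  rsum (fun j => mu (E j)) N <= INR b * mu U.
Proof.
  induction b as [|b IHb]; intros N E U hU hE hEU hcount.
  - rewrite (rsum_ext _ (fun _ => 0)), rsum_const; [simpl; lra|].
    intros j hj; rewrite <- mu_empty; apply mu_ext; intro x; split; [|tauto].
    intro h; specialize (hcount x (hEU _ _ h)).
    assert (hpos := count_lt_pos (fun j => E j x) N j hj h); lia.
  - (* E j = F j + E' j, where the F j (first hits) are disjoint and every point of U lies
       in at most b of the E' j (later hits). *)
    set (F := fun j x => E j x /\ ~ exists i, (i < j)%nat /\ E i x).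
    set (E' := fun j x => E j x /\ exists i, (i < j)%nat /\ E i x).
    assert (hF : forall j, borel X d (F j))
      by (intro; apply borel_and, borel_compl, borel_fin_union; auto).
    assert (hE' : forall j, borel X d (E' j)) by (intro; apply borel_and, borel_fin_union; auto).
    rewrite (rsum_ext _ (fun j => mu (F j) + mu (E' j))), rsum_plus, S_INR.
    2: { intros j _; rewrite <- mu_add by (auto; intros x [_ h1] [_ h2]; tauto).
         apply mu_ext; intro x; unfold F, E'; tauto. }
    assert (hfirst : rsum (fun j => mu (F j)) N <= mu U).
    { rewrite mu_rsum_disjoint by (auto; intros i j x hij [h1 _] [_ h2]; eauto).
      apply mu_mono; [apply borel_fin_union; exact hF|exact hU|].
      intros x [j [_ [h _]]]; eauto. }
    assert (hlater : rsum (fun j => mu (E' j)) N <= INR b * mu U).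
    { apply IHb; [exact hU|exact hE'|intros j x [h _]; eauto|].
      intros x hx; specialize (hcount x hx).
      assert (hdrop := count_lt_drop_first (fun j => E j x) N).
      destruct (classic (exists i, (i < N)%nat /\ E i x)) as [hex|hno].
      + rewrite ind_true in hdrop by exact hex; unfold E'; lia.
      + rewrite (count_lt_eq0 (fun j => E j x)) in hdrop by firstorder; unfold E'; lia. }
    lra.
Qed.

Lemma mu_rsum_le_count_real N (E : nat -> X -> Prop) U r :
  borel X d U -> (forall j, borel X d (E j)) -> (forall j x, E j x -> U x) ->
  (forall x, U x -> INR (count_lt (fun j => E j x) N) <= r) -> 0 <= r ->
  rsum (fun j => mu (E j)) N <= r * mu U.
Proof.
  intros hU hE hEU hcount hr.
  destruct (base_Int_part r) as [hfl1 hfl2].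
  assert (hfl0 : (0 <= Int_part r)%Z) by (apply Z.lt_succ_r, lt_IZR; rewrite succ_IZR; lra).
  assert (hb : INR (Z.to_nat (Int_part r)) = IZR (Int_part r))
    by (rewrite INR_IZR_INZ, Z2Nat.id; auto).
  apply Rle_trans with (INR (Z.to_nat (Int_part r)) * mu U).
  - apply mu_rsum_le_count; auto; intros x hx; specialize (hcount x hx).
    rewrite INR_IZR_INZ in hcount.
    assert (Z.of_nat (count_lt (fun j => E j x) N) < Int_part r + 1)%Z
      by (apply lt_IZR; rewrite plus_IZR; simpl; lra).
    lia.
  - rewrite hb; apply Rmult_le_compat_r; [apply mu_nonneg, hU|exact hfl1].
Qed.

End BorelMeasure.

Lemma fold_right_Rmax_lt {A : Type} (f : A -> R) a l e :
  fold_right Rmax a (map f l) < e <-> a < e /\ forall k, In k l -> f k < e.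
Proof.
  induction l as [|x l IHl]; simpl; [split; [intro; split; [auto|intros _ []]|tauto]|].
  rewrite Rmax_Rlt, IHl; split; [intros [h1 [h2 h3]]|intros [h1 h2]]; repeat split; auto.
  - intros k [<-|hk]; auto.
Qed.

Lemma fold_right_Rmax_ge_init {A : Type} (f : A -> R) a l : a <= fold_right Rmax a (map f l).
Proof. induction l as [|x l IHl]; simpl; [lra|eapply Rle_trans; [exact IHl|apply Rmax_r]]. Qed.

Lemma fold_right_Rmax_ge {A : Type} (f : A -> R) a l k :
  In k l -> f k <= fold_right Rmax a (map f l).
Proof.
  induction l as [|x l IHl]; simpl; [intros []|].
  intros [<-|hk]; [apply Rmax_l|eapply Rle_trans; [apply IHl, hk|apply Rmax_r]].
Qed.

Section Orbits.
Variable X : Type.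
Variable d : X -> X -> R.
Variable T : X -> X.
Hypothesis Htri : forall x y z, d x z <= d x y + d y z.
Hypothesis Hcont : continuous_map X d T.

Lemma dhat_lt n x y e : dhat X d T n x y < e <->
  dbar X d T 1 x y < e /\ forall k, (1 <= k <= n)%nat -> dbar X d T k x y < e.
Proof.
  unfold dhat; rewrite fold_right_Rmax_lt.
  split; intros [h1 h2]; split; auto; intros k hk; apply h2; rewrite in_seq in *; lia.
Qed.

Lemma dbar_le_dhat n x y k : k = 1%nat \/ (1 <= k <= n)%nat ->
  dbar X d T k x y <= dhat X d T n x y.
Proof.
  intros [->|hk]; [apply fold_right_Rmax_ge_init|].
  apply (fold_right_Rmax_ge (fun k => dbar X d T k x y)); rewrite in_seq; lia.
Qed.

Lemma dbar_rsum k x y : (1 <= k)%nat ->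
  dbar X d T k x y = / INR k * rsum (fun i => d (Nat.iter i T x) (Nat.iter i T y)) k.
Proof. intro hk; unfold dbar; rewrite sum_f_R0_rsum by exact hk; reflexivity. Qed.

Lemma dbar_le_of_close k x y z eta : 0 <= eta ->
  (forall i, (i < k)%nat -> d (Nat.iter i T y) (Nat.iter i T z) < eta) ->
  dbar X d T k x z <= dbar X d T k x y + eta.
Proof.
  intros heta h; destruct k as [|k]; [unfold dbar; simpl INR; rewrite Rinv_0; lra|].
  rewrite !dbar_rsum by lia.
  assert (hsum : rsum (fun i => d (Nat.iter i T x) (Nat.iter i T z)) (S k) <=
                 rsum (fun i => d (Nat.iter i T x) (Nat.iter i T y)) (S k) + INR (S k) * eta).
  { rewrite <- rsum_const, <- rsum_plus; apply rsum_le; intros i hi.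
    specialize (h i hi); specialize (Htri (Nat.iter i T x) (Nat.iter i T y) (Nat.iter i T z)); lra. }
  assert (hk : 0 < INR (S k)) by (apply lt_0_INR; lia).
  apply (Rmult_le_reg_l (INR (S k))); [exact hk|].
  rewrite Rmult_plus_distr_l, <- !Rmult_assoc, Rinv_r by lra; lra.
Qed.

Lemma iter_continuous i y eta : 0 < eta -> exists r, 0 < r /\
  forall z, d y z < r -> d (Nat.iter i T y) (Nat.iter i T z) < eta.
Proof.
  revert eta; induction i as [|i IHi]; intros eta heta; simpl; [exists eta; auto|].
  destruct (Hcont (Nat.iter i T y) eta heta) as [r1 [hr1 h1]].
  destruct (IHi r1 hr1) as [r2 [hr2 h2]]; exists r2; auto.
Qed.

Lemma iter_continuous_upto M y eta : 0 < eta -> exists r, 0 < r /\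
  forall z, d y z < r -> forall i, (i < M)%nat -> d (Nat.iter i T y) (Nat.iter i T z) < eta.
Proof.
  intro heta; induction M as [|M [r1 [hr1 h1]]]; [exists 1; split; [lra|intros; lia]|].
  destruct (iter_continuous M y eta heta) as [r2 [hr2 h2]].
  exists (Rmin r1 r2); split; [apply Rmin_pos; assumption|].
  intros z hz i hi; destruct (Nat.eq_dec i M) as [->|hiM].
  - apply h2; eapply Rlt_le_trans; [exact hz|apply Rmin_r].
  - apply h1; [eapply Rlt_le_trans; [exact hz|apply Rmin_l]|lia].
Qed.

Lemma open_preimage_iter j A : Defs.open_set X d A -> Defs.open_set X d (fun x => A (Nat.iter j T x)).
Proof.
  intros hA x hx; destruct (hA _ hx) as [r [hr h]].
  destruct (iter_continuous j x r hr) as [r' [hr' h']]; exists r'; auto.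
Qed.

Lemma open_ball_union (rho : nat -> X -> X -> R) n e F :
  (forall x y, rho n x y < e -> exists M eta, 0 < eta /\ forall z,
     (forall i, (i < M)%nat -> d (Nat.iter i T y) (Nat.iter i T z) < eta) -> rho n x z < e) ->
  Defs.open_set X d (ball_union X rho n e F).
Proof.
  intros h y [x [hx hxy]]; destruct (h x y hxy) as [M [eta [heta hM]]].
  destruct (iter_continuous_upto M y eta heta) as [r [hr hr']].
  exists r; split; [exact hr|]; intros z hz; exists x; auto.
Qed.

Lemma open_ball_dbar n e F : Defs.open_set X d (ball_union X (dbar X d T) n e F).
Proof.
  apply open_ball_union; intros x y h; exists n, ((e - dbar X d T n x y) / 2); split; [lra|].
  intros z hz.
  assert (hle : dbar X d T n x z <= dbar X d T n x y + (e - dbar X d T n x y) / 2)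
    by (apply dbar_le_of_close; [lra|exact hz]).
  lra.
Qed.

Lemma open_ball_dhat n e F : Defs.open_set X d (ball_union X (dhat X d T) n e F).
Proof.
  apply open_ball_union; intros x y h; exists (S n), ((e - dhat X d T n x y) / 2).
  split; [lra|]; intros z hz.
  assert (hk : forall k, k = 1%nat \/ (1 <= k <= n)%nat -> dbar X d T k x z < e).
  { intros k hk; assert (hxy := dbar_le_dhat n x y k hk).
    assert (hle : dbar X d T k x z <= dbar X d T k x y + (e - dhat X d T n x y) / 2)
      by (apply dbar_le_of_close; [lra|intros i hi; apply hz; lia]).
    lra. }
  apply dhat_lt; split; [apply hk; now left|intros k hk'; apply hk; now right].
Qed.

End Orbits.

Section Complexity.
Variable X : Type.
Variable d : X -> X -> R.
Variable T : X -> X.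
Variable mu : (X -> Prop) -> R.
Hypothesis Hmetric : is_metric X d.
Hypothesis Hcont : continuous_map X d T.
Hypothesis Hmu : borel_prob_measure X d mu.
Hypothesis Hinv : invariant_measure X d T mu.

Let Hnonneg : forall x y, 0 <= d x y := proj1 Hmetric.
Let Htri : forall x y z, d x z <= d x y + d y z := proj2 (proj2 (proj2 Hmetric)).

Lemma mu_preimage_iter j B : Defs.open_set X d B -> mu (fun x => B (Nat.iter j T x)) = mu B.
Proof.
  revert B; induction j as [|j IHj]; intros B hB; simpl; [reflexivity|].
  rewrite (IHj (fun y => B (T y))); [apply Hinv, borel_open; exact hB|].
  exact (open_preimage_iter X d T Hcont 1 B hB).
Qed.

Lemma dhat_lt_of_not_heavy c x eps n m j : (1 <= m)%nat -> (j + m <= n)%nat ->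
  ~ heavy (fun i => d (Nat.iter i T c) (Nat.iter i T x)) eps n j ->
  dhat X d T m (Nat.iter j T c) (Nat.iter j T x) < eps.
Proof.
  intros hm hjm hlight.
  assert (hk : forall k, (1 <= k <= m)%nat -> dbar X d T k (Nat.iter j T c) (Nat.iter j T x) < eps).
  { intros k hk; rewrite dbar_rsum by lia.
    rewrite (rsum_ext _ (fun i => d (Nat.iter (j + i) T c) (Nat.iter (j + i) T x)))
      by (intros; rewrite Nat.add_comm, !Nat.iter_add; reflexivity).
    assert (hsum : rsum (fun i => d (Nat.iter (j + i) T c) (Nat.iter (j + i) T x)) k < eps * INR k)
      by (apply Rnot_le_lt; intro h; apply hlight; exists k; repeat split; [lia|lia|exact h]).
    assert (hkpos : 0 < INR k) by (apply lt_0_INR; lia).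
    apply (Rmult_lt_reg_l (INR k)); [exact hkpos|].
    rewrite <- Rmult_assoc, Rinv_r by lra; lra. }
  apply dhat_lt; split; [apply hk; lia|exact hk].
Qed.

Lemma count_far_shifts c x delta eps m : (1 <= m)%nat -> 0 <= eps ->
  dbar X d T (2 * m) c x < delta ->
  eps * INR (count_lt (fun j => ~ (dhat X d T m (Nat.iter j T c) (Nat.iter j T x) < eps)%R) m)
    <= 2 * INR m * delta.
Proof.
  intros hm heps hcx; set (a := fun i => d (Nat.iter i T c) (Nat.iter i T x)).
  assert (hfar : (count_lt (fun j => ~ (dhat X d T m (Nat.iter j T c) (Nat.iter j T x) < eps)%R) m
                  <= count_lt (heavy a eps (2 * m)) (2 * m))%nat).
  { rewrite (count_lt_split _ m (2 * m)) by lia.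
    enough (h : (count_lt (fun j => ~ (dhat X d T m (Nat.iter j T c) (Nat.iter j T x) < eps)%R) m
                 <= count_lt (heavy a eps (2 * m)) m)%nat) by lia.
    apply count_lt_mono; intros j hj hnot; apply NNPP; intro hlight.
    apply hnot, (dhat_lt_of_not_heavy c x eps (2 * m)); [lia|lia|exact hlight]. }
  assert (hsun := rising_sun a eps (2 * m) (fun i => Hnonneg _ _) heps).
  assert (hm2 : 0 < INR (2 * m)) by (apply lt_0_INR; lia).
  assert (hsum : rsum a (2 * m) < INR (2 * m) * delta).
  { rewrite dbar_rsum in hcx by lia; apply (Rmult_lt_compat_l (INR (2 * m))) in hcx; [|exact hm2].
    rewrite <- Rmult_assoc, Rinv_r, Rmult_1_l in hcx by lra; exact hcx. }
  apply le_INR in hfar; rewrite mult_INR in hsum; simpl INR in hsum; nra.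
Qed.

Lemma shifted_cover m F delta eps : (1 <= m)%nat -> 0 <= delta -> 0 < eps ->
  exists j, (j < m)%nat /\
    (1 - 2 * delta / eps) * mu (ball_union X (dbar X d T) (2 * m) delta F)
      <= mu (ball_union X (dhat X d T) m eps (map (Nat.iter j T) F)).
Proof.
  intros hm hdelta heps.
  set (U := ball_union X (dbar X d T) (2 * m) delta F).
  set (A := fun j x => ball_union X (dhat X d T) m eps (map (Nat.iter j T) F) (Nat.iter j T x)).
  set (E := fun j x => U x /\ ~ A j x).
  assert (hU : borel X d U) by apply borel_open, (open_ball_dbar X d T Htri Hcont).
  assert (hA : forall j, borel X d (A j))
    by (intro; apply borel_open, open_preimage_iter, open_ball_dhat; assumption).
  assert (hE : forall j, borel X d (E j)) by (intro; apply borel_and, borel_compl; auto).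
  assert (hbad : rsum (fun j => mu (E j)) m <= 2 * delta / eps * INR m * mu U).
  { apply (mu_rsum_le_count_real X d mu Hmu); auto.
    - intros j x [h _]; exact h.
    - intros x [c [hc hcx]].
      assert (hfar := count_far_shifts c x delta eps m hm (Rlt_le _ _ heps) hcx).
      assert (hle : (count_lt (fun j => E j x) m <=
        count_lt (fun j => ~ (dhat X d T m (Nat.iter j T c) (Nat.iter j T x) < eps)%R) m)%nat).
      { apply count_lt_mono; intros j _ [_ hnA] hlt; apply hnA.
        exists (Nat.iter j T c); split; [apply in_map, hc|exact hlt]. }
      apply le_INR in hle; apply (Rmult_le_reg_l eps); [exact heps|].
      replace (eps * (2 * delta / eps * INR m)) with (2 * INR m * delta) by (field; lra).
      nra.
    - apply Rmult_le_pos; [|apply pos_INR]; apply Rle_mult_inv_pos; lra. }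
  assert (hsplit : forall j, (j < m)%nat -> mu U <= mu (A j) + mu (E j)).
  { intros j _; rewrite <- (mu_add X d mu Hmu) by (auto; intros x h1 [_ h2]; contradiction).
    apply (mu_mono X d mu Hmu); [exact hU|apply borel_or; auto|].
    intros x hx; destruct (classic (A j x)); [left|right; split]; assumption. }
  destruct (rsum_exists_large _ _ _ _ m hm hsplit hbad) as [j [hj hAj]].
  exists j; split; [exact hj|].
  rewrite <- (mu_preimage_iter j (ball_union X (dhat X d T) m eps (map (Nat.iter j T) F)))
    by apply (open_ball_dhat X d T Htri Hcont).
  exact hAj.
Qed.

Lemma bounded_complexity_dhat_dbar :
  bounded_complexity X (dhat X d T) mu -> bounded_complexity X (dbar X d T) mu.
Proof.
  intros H eps heps; destruct (H eps heps) as [C [hC HC]]; exists C; split; [exact hC|].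
  intros n hn; destruct (HC n hn) as [F [hnodup [hlen hF]]]; exists F; split; [exact hnodup|].
  split; [exact hlen|]; eapply Rlt_le_trans; [exact hF|].
  apply (mu_mono X d mu Hmu); [apply borel_open, (open_ball_dhat X d T Htri Hcont)|
                  apply borel_open, (open_ball_dbar X d T Htri Hcont)|].
  intros y [x [hx hxy]]; exists x; split; [exact hx|].
  assert (hle := dbar_le_dhat X d T n x y n ltac:(right; lia)); lra.
Qed.

Lemma bounded_complexity_dbar_dhat :
  bounded_complexity X (dbar X d T) mu -> bounded_complexity X (dhat X d T) mu.
Proof.
  intros H eps heps.
  (* chosen so that q := 2 delta / eps = eps / (eps + 2) < 1 and q + delta = eps / 2 *)
  set (delta := eps * eps / (2 * (eps + 2))).
  assert (hdelta : 0 < delta) by (unfold delta; apply Rdiv_lt_0_compat; nra).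
  destruct (H delta hdelta) as [C [hC HC]]; exists C; split; [exact hC|]; intros m hm.
  destruct (HC (2 * m)%nat ltac:(lia)) as [F [_ [hlen hF]]].
  destruct (shifted_cover m F delta eps hm (Rlt_le _ _ hdelta) heps) as [j [_ hj]].
  set (G := nodup (fun x y => excluded_middle_informative (x = y)) (map (Nat.iter j T) F)).
  exists G; split; [apply NoDup_nodup|split].
  - apply Nat.le_trans with (length (map (Nat.iter j T) F)); [|rewrite length_map; exact hlen].
    apply NoDup_incl_length; [apply NoDup_nodup|intros y; apply nodup_In].
  - rewrite (mu_ext X mu _ (ball_union X (dhat X d T) m eps (map (Nat.iter j T) F)))
      by (intro y; unfold ball_union, G; setoid_rewrite nodup_In; reflexivity).
    assert (hq : 2 * delta / eps = eps / (eps + 2)) by (unfold delta; field; lra).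
    assert (hq1 : eps / (eps + 2) < 1)
      by (apply (Rmult_lt_reg_r (eps + 2)); [lra|]; field_simplify; lra).
    assert (hq0 : 0 <= eps / (eps + 2)) by (apply Rle_mult_inv_pos; lra).
    assert (hqd : eps / (eps + 2) + delta = eps / 2) by (unfold delta; field; lra).
    rewrite hq in hj; nra.
Qed.

End Complexity.

Theorem mainTheorem9 (X : Type) (d : X -> X -> R) (T : X -> X)
  (mu : (X -> Prop) -> R)
  (Hmetric : is_metric X d) (Hcompact : compact_space X d)
  (Hcont : continuous_map X d T)
  (Hmu : borel_prob_measure X d mu) (Hinv : invariant_measure X d T mu) :
  bounded_complexity X (dbar X d T) mu <-> bounded_complexity X (dhat X d T) mu.
Proof.
  split; [apply bounded_complexity_dbar_dhat|apply bounded_complexity_dhat_dbar]; assumption.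
Qed.
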